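(* Let $\boldsymbol{f}\in\mathbb{R}^E$ route the demand $\boldsymbol{d}$ ($\mathbf{B}^\top\boldsymbol{f}=\boldsymbol{d}$) with $\boldsymbol{u}^-_e<\boldsymbol{f}_e<\boldsymbol{u}^+_e$ for all $e$ and $\boldsymbol{c}^\top\boldsymbol{f}>F^*$. Let $\tilde{\boldsymbol{g}}\in\mathbb{R}^E$ satisfy $\|\mathbf{L}(\boldsymbol{f})^{-1}(\tilde{\boldsymbol{g}}-\boldsymbol{g}(\boldsymbol{f}))\|_\infty\le\varepsilon$ for some $\varepsilon<\alpha/2$, and $\tilde{\boldsymbol{\ell}}\in\mathbb{R}^E_{>0}$ satisfy $\tilde{\boldsymbol{\ell}}\approx_2\boldsymbol{\ell}(\boldsymbol{f})$. If $\Phi(\boldsymbol{f})\le200m\log(mU)$ and $\log(\boldsymbol{c}^\top\boldsymbol{f}-F^* )\ge-10\log(mU)$, then $\frac{\tilde{\boldsymbol{g}}^\top(\boldsymbol{f}^*-\boldsymbol{f})}{100m+\|\tilde{\mathbf{L}}(\boldsymbol{f}^*-\boldsymbol{f})\|_1}\le-\alpha/4$, where $\boldsymbol{f}^*$ is an optimal (min-cost) flow.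
   Context: Setting: $G=(V,E)$ is a directed graph with $m=|E|$ edges and edge-vertex incidence matrix $\mathbf{B}$ (row of edge $(a,b)$ has $+1$ at $a$, $-1$ at $b$); demands $\boldsymbol{d}\in\mathbb{Z}^V$, lower/upper capacities $\boldsymbol{u}^-,\boldsymbol{u}^+\in\mathbb{Z}^E$, and costs $\boldsymbol{c}\in\mathbb{Z}^E$ are integers bounded in absolute value by $U$. $\boldsymbol{f}^*\in\arg\min\{\boldsymbol{c}^\top\boldsymbol{f}:\mathbf{B}^\top\boldsymbol{f}=\boldsymbol{d},\ \boldsymbol{u}^-\le\boldsymbol{f}\le\boldsymbol{u}^+\}$ and $F^*=\boldsymbol{c}^\top\boldsymbol{f}^*$. Let $\alpha=1/(1000\log(mU))$ and $\Phi(\boldsymbol{f})=20m\log(\boldsymbol{c}^\top\boldsymbol{f}-F^* )+\sum_{e}\big((\boldsymbol{u}^+_e-\boldsymbol{f}_e)^{-\alpha}+(\boldsymbol{f}_e-\boldsymbol{u}^-_e)^{-\alpha}\big)$. Lengths $\boldsymbol{\ell}(\boldsymbol{f})_e=(\boldsymbol{u}^+_e-\boldsymbol{f}_e)^{-1-\alpha}+(\boldsymbol{f}_e-\boldsymbol{u}^-_e)^{-1-\alpha}$; gradients $\boldsymbol{g}(\boldsymbol{f})=\nabla\Phi(\boldsymbol{f})$, i.e. $\boldsymbol{g}(\boldsymbol{f})_e=20m(\boldsymbol{c}^\top\boldsymbol{f}-F^* )^{-1}\boldsymbol{c}_e+\alpha(\boldsymbol{u}^+_e-\boldsymbol{f}_e)^{-1-\alpha}-\alpha(\boldsymbol{f}_e-\boldsymbol{u}^-_e)^{-1-\alpha}$.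 $\mathbf{L}(\boldsymbol{f})=\mathrm{diag}(\boldsymbol{\ell}(\boldsymbol{f}))$, $\tilde{\mathbf{L}}=\mathrm{diag}(\tilde{\boldsymbol{\ell}})$. $\boldsymbol{x}\approx_\beta\boldsymbol{y}$ means $\beta^{-1}\boldsymbol{y}_i\le\boldsymbol{x}_i\le\beta\boldsymbol{y}_i$ for all $i$. *)

From HB Require Import structures.
From mathcomp Require Import all_boot all_order all_algebra.
From mathcomp Require Import all_classical all_reals all_analysis.
Set Implicit Arguments. Unset Strict Implicit. Unset Printing Implicit Defensive.
Import Order.TTheory GRing.Theory Num.Theory.
Local Open Scope ring_scope.

Section Defs.
Variable R : realType.
Variables (V E : finType).

Definition incid (tl hd : E -> V) (e : E) (v : V) : R :=
  (tl e == v)%:R - (hd e == v)%:R.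

Definition routes (tl hd : E -> V) (d : V -> int) (f : E -> R) : Prop :=
  forall v : V, \sum_(e : E) incid tl hd e v * f e = (d v)%:~R.

Definition feasible (tl hd : E -> V) (d : V -> int) (um up : E -> int)
  (f : E -> R) : Prop :=
  routes tl hd d f /\ forall e, (um e)%:~R <= f e <= (up e)%:~R.

Definition cost (c : E -> int) (f : E -> R) : R := \sum_(e : E) (c e)%:~R * f e.

Definition alpha (U : nat) : R := (1000 * ln ((#|E| * U)%:R : R))^-1.

Definition Phi (U : nat) (um up c : E -> int) (Fstar : R) (f : E -> R) : R :=
  20 * #|E|%:R * ln (cost c f - Fstar)
  + \sum_(e : E) (((up e)%:~R - f e) `^ (- alpha U)
                 + (f e - (um e)%:~R) `^ (- alpha U)).

Definition ell (U : nat) (um up : E -> int) (f : E -> R) (e : E) : R :=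
  ((up e)%:~R - f e) `^ (-1 - alpha U) + (f e - (um e)%:~R) `^ (-1 - alpha U).

Definition grad (U : nat) (um up c : E -> int) (Fstar : R) (f : E -> R) (e : E) : R :=
  20 * #|E|%:R * (cost c f - Fstar)^-1 * (c e)%:~R
  + alpha U * ((up e)%:~R - f e) `^ (-1 - alpha U)
  - alpha U * (f e - (um e)%:~R) `^ (-1 - alpha U).

Definition approx_by (beta : R) (x y : E -> R) : Prop :=
  forall e, beta^-1 * y e <= x e <= beta * y e.

End Defs.

From HB Require Import structures.
From mathcomp Require Import all_boot all_order all_algebra.
From mathcomp Require Import all_classical all_reals all_analysis.
From mathcomp Require Import ring lra.
Import Order.TTheory GRing.Theory Num.Theory.
Set Implicit Arguments.
Unset Strict Implicit.
Unset Printing Implicit Defensive.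
Local Open Scope ring_scope.

(* On an edge e put s = u+_e - f_e, t = f_e - u-_e and D = f*_e - f_e, so that
   -t <= D <= s.  With A = s^(-1-alpha) and B = t^(-1-alpha) the barrier part of
   g(f)_e is alpha (A - B) and ell_e = A + B; a case split on the sign of D gives
   alpha (A - B) D + alpha (A + B) |D| <= 2 alpha (s^(-alpha) + t^(-alpha)), while the
   gradient error and the weights l~ <= 2 ell use up at most
   (eps + alpha/2) (A + B) |D| <= alpha (A + B) |D|.  Summed over the edges, the cost
   part of g(f) contributes exactly -20m, and the bounds on Phi(f) and on the gap
   bound the barrier sum by 400 m log(mU) = 0.4 m / alpha.  Hence
   g~(f* - f) + alpha/4 |L~(f* - f)|_1 <= -19.2 m <= -(alpha/4) 100 m, as
   alpha <= 1/500. *)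

Section RealFacts.
Variable R : realType.

Lemma ln_ge_1_subV (x : R) : 0 < x -> 1 - x^-1 <= ln x.
Proof.
move=> x_gt0; have := @le_ln1Dx R (x^-1 - 1).
rewrite addrCA subrr addr0 lnV ?posrE // ltrBrDl addrN invr_gt0.
by move=> /(_ x_gt0); lra.
Qed.

Lemma powRB1_mulr (x r : R) : 0 < x -> x `^ (r - 1) * x = x `^ r.
Proof.
move=> x_gt0; rewrite -{2}(powRr1 (ltW x_gt0)) -powRD ?subrK //.
by apply/implyP => _; rewrite gt_eqF.
Qed.

Lemma abs_combination_le_box (a b s t D : R) :
  0 <= a -> 0 <= b -> 0 <= s -> 0 <= t -> - t <= D <= s ->
  (a - b) * D + (a + b) * `|D| <= 2 * (a * s + b * t).
Proof.
move=> a_ge0 b_ge0 s_ge0 t_ge0 /andP[tD Ds].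
have bt_ge0 : 0 <= b * t by exact: mulr_ge0.
have as_ge0 : 0 <= a * s by exact: mulr_ge0.
have [D_ge0|D_lt0] := lerP 0 D.
- rewrite ger0_norm //.
  have : a * D <= a * s by exact: ler_wpM2l.
  lra.
- rewrite ltr0_norm //.
  have : b * - D <= b * t by apply: ler_wpM2l; lra.
  lra.
Qed.

Lemma perturbed_step_le (a eps G g l A B s t D : R) :
  0 <= a -> eps <= a / 2 -> 0 <= A -> 0 <= B -> 0 <= s -> 0 <= t ->
  - t <= D <= s ->
  `|g - (G + a * A - a * B)| <= eps * (A + B) -> 0 <= l <= 2 * (A + B) ->
  g * D + a / 4 * `|l * D| <= G * D + 2 * a * (A * s + B * t).
Proof.
move=> a_ge0 eps_le A_ge0 B_ge0 s_ge0 t_ge0 hD g_err /andP[l_ge0 l_le].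
have box := abs_combination_le_box A_ge0 B_ge0 s_ge0 t_ge0 hD.
have absD_ge0 := normr_ge0 D.
have AB_ge0 : 0 <= A + B by exact: addr_ge0.
have err : (g - (G + a * A - a * B)) * D <= eps * (A + B) * `|D|.
  apply: le_trans (ler_norm _) _; rewrite normrM.
  exact: ler_wpM2r.
have lD : a / 4 * (l * `|D|) <= a / 4 * (2 * (A + B) * `|D|).
  by apply: ler_wpM2l; [lra | exact: ler_wpM2r].
have slack : 0 <= (a / 2 - eps) * ((A + B) * `|D|).
  by apply: mulr_ge0; [lra | exact: mulr_ge0].
have aBox : a * ((A - B) * D + (A + B) * `|D|) <= a * (2 * (A * s + B * t)).
  exact: ler_wpM2l.
rewrite normrM (ger0_norm l_ge0).
nra.
Qed.

Lemma ratio_le_of_sum_le (X S M k : R) :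
  0 < M -> 0 <= S -> X + k * S <= - (k * M) -> X / (M + S) <= - k.
Proof.
move=> M_gt0 S_ge0 h; rewrite ler_pdivrMr; last by apply: ltr_wpDr.
lra.
Qed.

End RealFacts.

Section Alpha.
Variables (R : realType) (E : finType) (U : nat).
Let L : R := ln (#|E| * U)%:R.

Lemma alpha_le0 : L <= 0 -> alpha R E U <= 0.
Proof. by move=> L_le0; rewrite /alpha -/L invr_le0; lra. Qed.

Lemma alpha_gt0 : 0 < L -> 0 < alpha R E U.
Proof. by move=> L_gt0; rewrite /alpha -/L invr_gt0; lra. Qed.

Lemma alpha_mul_ln : 0 < L -> alpha R E U * L = 1 / 1000.
Proof. by move=> L_gt0; rewrite /alpha -/L; field; rewrite gt_eqF. Qed.

Lemma ln_ge_half : 0 < L -> 1 / 2 <= L.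
Proof.
move=> L_gt0; have two_le : (2 : R) <= (#|E| * U)%:R.
  rewrite ler_nat ltnNge; apply/negP => mU_le1.
  by move: L_gt0; rewrite /L ltNge ln_le0 // (ler_nat R _ 1).
apply: le_trans (ln_ge_1_subV (lt_le_trans _ two_le)) => //.
have : (#|E| * U)%:R^-1 <= (2 : R)^-1 by rewrite lef_pV2 ?posrE // (lt_le_trans _ two_le).
lra.
Qed.

Lemma alpha_le : 0 < L -> alpha R E U <= 1 / 500.
Proof.
move=> L_gt0; have := alpha_mul_ln L_gt0; have := ln_ge_half L_gt0.
have := alpha_gt0 L_gt0; nra.
Qed.

Lemma card_gt0_of_ln_gt0 : 0 < L -> (0 < #|E|)%N.
Proof. by rewrite lt0n /L; apply: contraTneq => ->; rewrite mul0n ln0 ?ltxx. Qed.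

End Alpha.

Definition barrier (R : realType) (E : finType) (U : nat) (um up : E -> int)
    (f : E -> R) (e : E) : R :=
  ((up e)%:~R - f e) `^ (- alpha R E U) + (f e - (um e)%:~R) `^ (- alpha R E U).

Section EdgeBounds.
Variables (R : realType) (E : finType) (U : nat) (um up c : E -> int).
Variables (fstar f : E -> R).
Hypothesis f_int : forall e, (um e)%:~R < f e < (up e)%:~R.
Hypothesis fstar_cap : forall e, (um e)%:~R <= fstar e <= (up e)%:~R.
Let a := alpha R E U.
Let K := 20 * #|E|%:R * (cost c f - cost c fstar)^-1.

Lemma edge_step_le e (g l eps : R) :
  0 <= a -> eps <= a / 2 ->
  `|(ell U um up f e)^-1 * (g - grad U um up c (cost c fstar) f e)| <= eps ->
  0 <= l <= 2 * ell U um up f e ->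
  g * (fstar e - f e) + a / 4 * `|l * (fstar e - f e)|
    <= K * ((c e)%:~R * (fstar e - f e)) + 2 * a * barrier U um up f e.
Proof.
move=> a_ge0 eps_le g_err l_bd.
have /andP[um_f f_up] := f_int e; have /andP[um_fs fs_up] := fstar_cap e.
rewrite /barrier -/a.
move: g_err l_bd; rewrite /ell /grad -/a -/K.
set s := (up e)%:~R - f e; set t := f e - (um e)%:~R.
have s_gt0 : 0 < s by rewrite subr_gt0.
have t_gt0 : 0 < t by rewrite subr_gt0.
rewrite -(powRB1_mulr (- a) s_gt0) -(powRB1_mulr (- a) t_gt0) [- a - 1]addrC.
have A_gt0 : 0 < s `^ (-1 - a) by exact: powR_gt0.
have B_gt0 : 0 < t `^ (-1 - a) by exact: powR_gt0.
move: (s `^ (-1 - a)) (t `^ (-1 - a)) A_gt0 B_gt0 => A B A_gt0 B_gt0.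
rewrite normrM normfV (gtr0_norm (addr_gt0 A_gt0 B_gt0)) mulrC.
rewrite ler_pdivrMr ?addr_gt0 // => g_err.
rewrite [K * (_ * _)]mulrA.
apply: perturbed_step_le (ltW A_gt0) (ltW B_gt0) (ltW s_gt0) (ltW t_gt0) _ g_err => //.
by rewrite /s /t; lra.
Qed.

Lemma cost_sub (g h : E -> R) :
  cost c g - cost c h = \sum_(e : E) (c e)%:~R * (g e - h e).
Proof. by rewrite /cost -sumrB; apply: eq_bigr => e _; rewrite mulrBr. Qed.

Lemma progress_sum_le (gt lt : E -> R) (eps : R) :
  0 <= a -> eps <= a / 2 -> cost c fstar < cost c f ->
  (forall e, `|(ell U um up f e)^-1 *
               (gt e - grad U um up c (cost c fstar) f e)| <= eps) ->
  (forall e, 0 <= lt e <= 2 * ell U um up f e) ->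
  \sum_(e : E) gt e * (fstar e - f e)
    + a / 4 * \sum_(e : E) `|lt e * (fstar e - f e)|
  <= - (20 * #|E|%:R) + 2 * a * \sum_(e : E) barrier U um up f e.
Proof.
move=> a_ge0 eps_le gap_gt0 gt_err lt_bd.
have -> : - (20 * #|E|%:R) = K * (cost c fstar - cost c f).
  by rewrite /K; field; rewrite subr_eq0 gt_eqF.
rewrite cost_sub !mulr_sumr -!big_split /=.
by apply: ler_sum => e _; exact: edge_step_le a_ge0 eps_le (gt_err e) (lt_bd e).
Qed.

Lemma barrier_sum_le (L : R) :
  Phi U um up c (cost c fstar) f <= 200 * #|E|%:R * L ->
  - 10 * L <= ln (cost c f - cost c fstar) ->
  \sum_(e : E) barrier U um up f e <= 400 * #|E|%:R * L.
Proof.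
have -> : Phi U um up c (cost c fstar) f = 20 * #|E|%:R *
    ln (cost c f - cost c fstar) + \sum_(e : E) barrier U um up f e by [].
have : 0 <= (#|E|%:R : R) by [].
nra.
Qed.

End EdgeBounds.

Theorem lemma4p7 (R : realType) (V E : finType) (tl hd : E -> V)
  (d : V -> int) (um up c : E -> int) (U : nat)
  (hd_bd : forall v, `|d v| <= U%:Z) (hum : forall e, `|um e| <= U%:Z)
  (hup : forall e, `|up e| <= U%:Z) (hc : forall e, `|c e| <= U%:Z)
  (fstar : E -> R)
  (hfs_feas : feasible tl hd d um up fstar)
  (hfs_opt : forall g : E -> R, feasible tl hd d um up g ->
               cost c fstar <= cost c g)
  (f gt lt : E -> R) (eps : R)
  (hf_route : routes tl hd d f)
  (hf_int : forall e, (um e)%:~R < f e < (up e)%:~R)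
  (hf_gap : cost c f > cost c fstar)
  (hgt : forall e, `|(ell U um up f e)^-1 *
                    (gt e - grad U um up c (cost c fstar) f e)| <= eps)
  (heps : eps < alpha R E U / 2)
  (hlt_pos : forall e, 0 < lt e)
  (hlt : approx_by 2 lt (ell U um up f))
  (hPhi : Phi U um up c (cost c fstar) f <= 200 * #|E|%:R * ln ((#|E| * U)%:R : R))
  (hgap : ln (cost c f - cost c fstar) >= - 10 * ln ((#|E| * U)%:R : R)) :
  (\sum_(e : E) gt e * (fstar e - f e)) /
    (100 * #|E|%:R + \sum_(e : E) `|lt e * (fstar e - f e)|)
  <= - (alpha R E U) / 4.
Proof.
set L := ln ((#|E| * U)%:R : R).
have [L_le0|L_gt0] := lerP L 0.
  have a_le0 := alpha_le0 L_le0.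
  case: (pickP (fun _ : E => true)) => [e0 _|noE].
    by have := le_trans (normr_ge0 _) (hgt e0); lra.
  have sum0 (F : E -> R) : \sum_(e : E) F e = 0.
    by apply: big1 => e; have := noE e.
  rewrite !sum0 mul0r; lra.
have a_gt0 := alpha_gt0 L_gt0.
have m_gt0 : 0 < (#|E|%:R : R) by rewrite ltr0n (card_gt0_of_ln_gt0 L_gt0).
have lt_bd e : 0 <= lt e <= 2 * ell U um up f e.
  by have /andP[_ ->] := hlt e; rewrite ltW.
have := progress_sum_le hf_int hfs_feas.2 (ltW a_gt0) (ltW heps) hf_gap hgt lt_bd.
have := ler_wpM2l (ltW a_gt0) (barrier_sum_le hPhi hgap).
have -> : alpha R E U * (400 * #|E|%:R * L) = 2 / 5 * #|E|%:R.
  by rewrite [400 * _ * L]mulrC mulrA alpha_mul_ln //; field.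
have : alpha R E U * #|E|%:R <= 1 / 500 * #|E|%:R.
  by apply: ler_wpM2r; [exact: ltW | exact: alpha_le].
move=> am_le bar_le sum_le.
rewrite mulNr; apply: ratio_le_of_sum_le; first by rewrite mulr_gt0.
  by apply: sumr_ge0 => e _; exact: normr_ge0.
lra.
Qed.
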